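(* Let $X$ be convex and let $f$ be $\alpha$-robustly quasiconvex for some $\alpha>0$, with $X\subset\operatorname{dom}f$. Then $\mathrm{Sol}(\cdot)$ is lower semicontinuous at $0$ if and only if (a) $\mathrm{Sol}(0)$ is a singleton and (b) $X^\infty\cap\mathcal{K}_q(f)=\{0\}$.
   Context: Standing assumptions: $f:\mathbb{R}^n\to\mathbb{R}\cup\{\pm\infty\}$ is proper (never $-\infty$ and finite at some point) and lower semicontinuous; $X\subset\mathbb{R}^n$ is a nonempty closed set with $\operatorname{dom}f\cap X$ unbounded. $f$ is $\alpha$-robustly quasiconvex ($\alpha\ge0$) if $x\mapsto f(x)+\langle u,x\rangle$ is quasiconvex for every $u$ in the open ball $\mathbb{B}_\alpha$ of radius $\alpha$ about $0$ (quasiconvex: $g(\lambda x+(1-\lambda)y)\le\max\{g(x),g(y)\}$ for $x,y\in\operatorname{dom}g$, $\lambda\in[0,1]$). $X^\infty=\{u:\exists t_k\to+\infty,\ \exists x_k\in X,\ x_k/t_k\to u\}$. $f^\infty_q(u)=\sup_{x\in\operatorname{dom}f}\sup_{t>0}\frac{f(x+tu)-f(x)}{t}$, $\mathcal{K}_q(f)=\{d: f^\infty_q(d)\le0\}$. $f_u(x)=f(x)-\langle u,x\rangle$, $\mathrm{Sol}(u)=\{x\in X: f_u(x)\le f_u(y)\ \forall y\in X\}$. A set-valued map $F$ is lower semicontinuous at $\bar u$ if $F(\bar u)\ne\emptyset$ and for every open $V$ with $F(\bar u)\cap V\ne\emptyset$ there is a neighborhood $U$ of $\bar u$ with $F(u)\cap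 V\ne\emptyset$ for all $u\in U$. *)

(* R : realType, points of R^n are row vectors 'rV[R]_n
   (with the product topology = Euclidean topology), f takes values in \bar R. *)
From HB Require Import structures.
From mathcomp Require Import all_boot all_order all_algebra.
From mathcomp Require Import all_classical all_reals all_analysis.
Set Implicit Arguments. Unset Strict Implicit. Unset Printing Implicit Defensive.
Import Order.TTheory GRing.Theory Num.Theory.
Import numFieldNormedType.Exports.
Local Open Scope classical_set_scope.
Local Open Scope ring_scope.

Section Defs.
Variables (R : realType) (n : nat).
Notation V := 'rV[R]_n.

Definition dotp (u x : V) : R := \sum_(i < n) u ord0 i * x ord0 i.
Definition enorm (x : V) : R := Num.sqrt (dotp x x).

Definition dom (f : V -> \bar R) : set V := [set x | (f x < +oo)%E].

Definition proper_fun (f : V -> \bar R) : Prop :=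
  (forall x, f x != -oo%E) /\ (exists x, f x \is a fin_num).

Definition is_convex (X : set V) : Prop :=
  forall x y (l : R), X x -> X y -> 0 <= l <= 1 -> X (l *: x + (1 - l) *: y).

Definition quasiconvex (g : V -> \bar R) : Prop :=
  forall x y (l : R), dom g x -> dom g y -> 0 <= l <= 1 ->
    (g (l *: x + (1 - l) *: y)%R <= maxe (g x) (g y))%E.

Definition open_ball0 (a : R) : set V := [set u | enorm u < a].

Definition robustly_quasiconvex (a : R) (f : V -> \bar R) : Prop :=
  forall u, open_ball0 a u -> quasiconvex (fun x => (f x + (dotp u x)%:E)%E).

Definition asymptotic_cone (X : set V) : set V :=
  [set u | exists (t : R^nat) (x : nat -> V),
     t @ \oo --> +oo /\ (forall k, X (x k)) /\
     (fun k => (t k)^-1 *: x k) @ \oo --> u].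

Definition qasymp (f : V -> \bar R) (u : V) : \bar R :=
  ereal_sup [set y : \bar R | exists (x : V) (t : R),
     [/\ dom f x, 0 < t & y = ((f (x + t *: u)%R - f x) * (t^-1)%:E)%E]].

Definition Kq (f : V -> \bar R) : set V := [set d | (qasymp f d <= 0)%E].

Definition fshift (f : V -> \bar R) (u : V) (x : V) : \bar R :=
  (f x - (dotp u x)%:E)%E.

Definition Sol (f : V -> \bar R) (X : set V) (u : V) : set V :=
  [set x | X x /\ forall y, X y -> (fshift f u x <= fshift f u y)%E].

Definition lsc_setmap (F : V -> set V) (ub : V) : Prop :=
  F ub !=set0 /\
  forall W : set V, open W -> F ub `&` W !=set0 ->
    exists2 U, nbhs ub U & forall u, U u -> F u `&` W !=set0.

Definition unbounded (A : set V) : Prop :=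
  forall M : R, exists2 x, A x & M < enorm x.

End Defs.

From HB Require Import structures.
From mathcomp Require Import all_boot all_order all_algebra.
From mathcomp Require Import all_classical all_reals all_analysis.
From mathcomp Require Import lra ring.
Import Order.TTheory GRing.Theory Num.Theory.
Import numFieldNormedType.Exports.
Local Open Scope classical_set_scope.
Local Open Scope ring_scope.

(* (=>) If Sol(0) contained x1 <> x2, tilting f by a small multiple of
   d = x1 - x2 would make x1 strictly better than every point of the open
   half-space {<d, .> < <d, x1>}, which contains x2, so Sol(u) could not meet
   it for u near 0.  If d lies in the asymptotic cone of X and in K_q(f), then
   x0 + d is in X and f(x0 + d) <= f(x0), so x0 + d lies in Sol(0) = {x0}.
   (<=) By compactness and lower semicontinuity, f exceeds f(x0) by some c > 0
   on X meet the sphere of radius r about x0, and this gap survives every small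
   tilt u.  A minimizer of f_u on X meet the closed ball B(x0, r) is then a
   global minimizer: for y outside the ball, the segment [x0, y] crosses the
   sphere at some p, and quasiconvexity of f_u (robust quasiconvexity of f)
   gives f_u(p) <= max(f_u(x0), f_u(y)) = f_u(y).  This direction uses only
   (a); condition (b) follows from (a). *)

Section InnerProduct.
Context {R : realType} {n : nat}.
Local Notation V := 'rV[R]_n.

Lemma dotpDr (u x y : V) : dotp u (x + y) = dotp u x + dotp u y.
Proof. by rewrite /dotp -big_split /=; apply: eq_bigr => i _; rewrite mxE mulrDr. Qed.

Lemma dotpNr (u x : V) : dotp u (- x) = - dotp u x.
Proof. by rewrite /dotp -sumrN; apply: eq_bigr => i _; rewrite mxE mulrN. Qed.

Lemma dotpBr (u x y : V) : dotp u (x - y) = dotp u x - dotp u y.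
Proof. by rewrite dotpDr dotpNr. Qed.

Lemma dotpZl a (u x : V) : dotp (a *: u) x = a * dotp u x.
Proof. by rewrite /dotp mulr_sumr; apply: eq_bigr => i _; rewrite mxE mulrA. Qed.

Lemma dotpNl (u x : V) : dotp (- u) x = - dotp u x.
Proof. by rewrite /dotp -sumrN; apply: eq_bigr => i _; rewrite mxE mulNr. Qed.

Lemma dotp0l (x : V) : dotp 0 x = 0.
Proof. by rewrite /dotp big1 // => i _; rewrite mxE mul0r. Qed.

Lemma dotp_gt0 (x : V) : x != 0 -> 0 < dotp x x.
Proof.
move=> x0; have [i xi] : exists i, x ord0 i != 0.
  apply/not_existsP => x_eq0; move/eqP: x0; apply; apply/rowP => i.
  by rewrite mxE; apply/eqP/negPn/negP; exact: x_eq0.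
rewrite /dotp (bigD1 i) //= ltr_pwDl ?sumr_ge0 // => [|j _].
  by rewrite -expr2 lt_def sqrf_eq0 xi sqr_ge0.
by rewrite -expr2 sqr_ge0.
Qed.

Lemma mx_norm_coord (x : V) i : `|x ord0 i| <= `|x|.
Proof.
rewrite [leRHS]/Num.norm /= mx_normrE; apply/bigmax_geP; right => /=.
by exists (ord0, i).
Qed.

Lemma dotp_le_mx_norm (u x : V) : `|dotp u x| <= n%:R * (`|u| * `|x|).
Proof.
apply: le_trans (ler_norm_sum _ _ _) _.
rewrite mulr_natl -[n in _ *+ n]card_ord -sumr_const; apply: ler_sum => i _.
by rewrite normrM ler_pM ?mx_norm_coord.
Qed.

Lemma enorm_le_mx_norm (x : V) : enorm x <= n%:R * `|x|.
Proof.
have nx0 : 0 <= n%:R * `|x| by rewrite mulr_ge0.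
rewrite /enorm -(ger0_norm nx0) -sqrtr_sqr ler_sqrt ?sqr_ge0 //.
apply: le_trans (ler_norm _) (le_trans (dotp_le_mx_norm x x) _).
have n_le_sqr : n%:R <= n%:R ^+ 2 :> R.
  by rewrite -natrX ler_nat; case: n => // k; rewrite expnS leq_pmulr.
have := normr_ge0 x; rewrite exprMn; nra.
Qed.

Lemma dotp_continuous (u : V) : continuous (dotp u).
Proof.
move=> x A /= /nbhs_ballP [e e0 hA].
have h0 : 0 < n%:R * `|u| + 1 by rewrite ltr_wpDl ?mulr_ge0.
apply/nbhs_ballP; exists (e / (n%:R * `|u| + 1)) => [|y]; first by apply: divr_gt0.
rewrite mx_norm_ball /ball_ => xy; apply: hA; rewrite -ball_normE /=.
rewrite -dotpBr; apply: le_lt_trans (dotp_le_mx_norm _ _) _.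
rewrite mulrA (@le_lt_trans _ _ ((n%:R * `|u| + 1) * `|x - y|)) //.
  by rewrite ler_wpM2r // lerDl.
by rewrite mulrC -ltr_pdivlMr.
Qed.

End InnerProduct.

Section SemicontinuousMinimum.
Context {R : realType} {T : topologicalType}.
Implicit Types (g : T -> \bar R) (K : set T).

Lemma lower_semicontinuous_compact_min g K :
  lower_semicontinuous g -> compact K -> K !=set0 ->
  exists2 p, K p & forall y, K y -> (g p <= g y)%E.
Proof.
move=> lsc_g cK [x0 Kx0]; apply: contrapT => no_min.
have descent p : K p -> exists2 y, K y & (g y < g p)%E.
  move=> Kp; apply: contrapT => no_lower; apply: no_min; exists p => // y Ky.
  by rewrite leNgt; apply/negP => gyp; apply: no_lower; exists y.
pose B p := K `&` [set y | (g y < g p)%E].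
have B_filter : ProperFilter (filter_from K B).
  apply: filter_from_proper; last first.
    by move=> p Kp; have [y Ky gy] := descent p Kp; exists y.
  apply: filter_from_filter; first by exists x0.
  move=> p q Kp Kq; have [gpq|gqp] := leP (g p) (g q).
    by exists p => // y [Ky gy]; do 2 split => //; exact: lt_le_trans gpq.
  by exists q => // y [Ky gy]; do 2 split => //; exact: lt_trans gqp.
have [p [Kp p_cluster]] : exists p, K p /\ cluster (filter_from K B) p.
  by apply: cK; exists x0 => // y [].
have [y Ky gyp] := descent p Kp; have [z Kz gzy] := descent y Ky.
case Egy: (g y) gzy gyp => [a| |] gzy gyp; last 2 first.
- by rewrite ltNge leey in gyp.
- by rewrite ltNge leNye in gzy.
have [N Np N_gt] := lsc_g p a gyp.
have [w [[_ gwy] Nw]] := p_cluster (B y) N (in_filter_from B Ky) Np.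
by move: gwy; rewrite Egy => /lt_trans /(_ (N_gt w Nw)); rewrite ltxx.
Qed.

Lemma lower_semicontinuous_compact_gap g K (a : R) :
  lower_semicontinuous g -> compact K -> (forall p, K p -> (a%:E < g p)%E) ->
  exists2 c, 0 < c & forall p, K p -> ((a + c)%:E <= g p)%E.
Proof.
move=> lsc_g cK g_gt; have [K0|/set0P K_neq0] := eqVneq K set0.
  by exists 1 => // p; rewrite K0.
have [p Kp p_min] := lower_semicontinuous_compact_min _ _ lsc_g cK K_neq0.
move: (g_gt p Kp) (p_min); case: (g p) => [b| |] // ab gp_min.
- by exists (b - a); rewrite ?subr_gt0 -?lte_fin // addrC subrK.
- by exists 1 => // y Ky; rewrite (le_trans _ (gp_min y Ky)) ?leey.
Qed.

Lemma lower_semicontinuousB g (h : T -> R) :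
  lower_semicontinuous g -> continuous h ->
  lower_semicontinuous (fun x => g x - (h x)%:E)%E.
Proof.
move=> lsc_g ch x a agx.
have [b [e [e0 bgx abe]]] :
    exists b e, [/\ 0 < e, (b%:E < g x)%E & a < b - h x - e].
  move: agx; case: (g x) => [r| |] //= agx.
    exists (r - (r - h x - a) / 3), ((r - h x - a) / 3).
    by move: agx; rewrite -EFinB !lte_fin; split; lra.
  by exists (a + h x + 2), 1; split => //; [exact: ltry | lra].
have [N Nx N_gt] := lsc_g x b bgx.
exists (N `&` h @^-1` ball (h x) e); first exact/filterI/ch/nbhsx_ballx.
move=> y [/N_gt gy]; rewrite /= -ball_normE /= ltr_distl => /andP[hy _].
move: gy; case: (g y) => [s| |] //=; last by move=> _; exact: ltry.
by rewrite -EFinB !lte_fin => bs; lra.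
Qed.
End SemicontinuousMinimum.

Section ConvexGeometry.
Context {R : realType} {n : nat}.
Local Notation V := 'rV[R]_n.
Implicit Types (X : set V) (x d : V).

Lemma asymptotic_cone_recession [X x d] :
  closed X -> is_convex X -> X x -> asymptotic_cone X d -> X (x + d).
Proof.
move=> cX convX Xx [t [y [t_oo [Xy ty_d]]]].
have t_ge1 : \forall k \near \oo, 1 <= t k by move/cvgryPge : t_oo; apply.
have t_gt0 : \forall k \near \oo, 0 < t k.
  by apply: filterS t_ge1 => k; exact: lt_le_trans ltr01.
have tV0 : (fun k => (t k)^-1) @ \oo --> 0 by apply/(gtr0_cvgV0 t_gt0).
pose z k := (t k)^-1 *: y k + (1 - (t k)^-1) *: x.
apply: (@closed_cvg _ _ \oo _ z X cX).
  near=> k; have t1k : 1 <= t k by near: k.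
  apply: convX => //; rewrite invr_ge0 invf_le1 ?(lt_le_trans ltr01) //=.
  by rewrite t1k andbT (le_trans ler01).
rewrite addrC; apply: cvgD => //.
have : (fun k => (1 - (t k)^-1) *: x) @ \oo --> (1 - 0) *: x.
  by apply: cvgZr_tmp; apply: cvgB => //; exact: cvg_cst.
by rewrite subr0 scale1r.
Unshelve. all: by end_near.
Qed.

Lemma asymptotic_cone0 [X x] : X x -> asymptotic_cone X 0.
Proof.
move=> Xx; exists (fun k => k%:R), (fun _ => x); split; first exact: cvgr_idn.
split => //; rewrite -(scale0r x); apply: cvgZr_tmp.
apply/gtr0_cvgV0; last exact: cvgr_idn.
by near=> k; rewrite ltr0n; near: k; exists 1%N.
Unshelve. all: by end_near.
Qed.

Lemma compact_closed_ball_meet X x r :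
  closed X -> compact (X `&` closed_ball_ Num.norm x r).
Proof.
move=> cX; apply: bounded_closed_compact; last by apply: closedI => //; exact: closed_closed_ball_.
exists (`|x| + r); split; first exact: num_real.
move=> M M_gt y [_ /= xy_le]; apply: le_trans (ltW M_gt).
have -> : y = x - (x - y) by rewrite opprB addrC subrK.
by rewrite (le_trans (ler_normB _ _)) ?lerD2l.
Qed.

Lemma closed_sphere x r : closed [set y : V | `|x - y| = r].
Proof.
rewrite -/((Num.norm \o (fun y => x - y)) @^-1` [set s | s = r]).
apply: (preimage_closed _ (@closed_eq _ _)) => y _.
apply: (continuous_comp _ (@norm_continuous _ _ _)).
exact: (continuousB (@cst_continuous _ _ _ _)).
Qed.

Lemma quasiconvex_min_sphere [g : V -> \bar R] [X x0 m r] :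
  is_convex X -> X `<=` dom g -> quasiconvex g -> X x0 -> 0 < r ->
  (forall p, X p -> `|x0 - p| = r -> (g x0 < g p)%E) ->
  X m -> (forall y, X y -> `|x0 - y| <= r -> (g m <= g y)%E) ->
  forall y, X y -> (g m <= g y)%E.
Proof.
move=> convX Xg qg Xx0 r0 sphere_gt Xm m_min y Xy.
have [|far_y] := leP `|x0 - y| r; first exact: m_min.
have xy_gt0 : 0 < `|x0 - y| by exact: lt_trans far_y.
pose l := r / `|x0 - y|.
have l01 : 0 <= l <= 1.
  by rewrite /l divr_ge0 ?(ltW r0) ?(ltW xy_gt0) //= ler_pdivrMr // mul1r ltW.
pose p := l *: y + (1 - l) *: x0.
have Xp : X p by exact: convX.
have x0p : `|x0 - p| = r.
  have -> : x0 - p = l *: (x0 - y) by apply/rowP => i; rewrite !mxE; ring.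
  by rewrite normrZ ger0_norm ?divr_ge0 ?ltW // divfK // gt_eqF.
have := qg y x0 l (Xg y Xy) (Xg x0 Xx0) l01; rewrite le_max => /orP[gpy|gpx0].
  by rewrite (le_trans _ gpy) // m_min // x0p.
by have := lt_le_trans (sphere_gt p Xp x0p) gpx0; rewrite ltxx.
Qed.
End ConvexGeometry.

Section SolutionMap.
Context {R : realType} {n : nat} {f : 'rV[R]_n -> \bar R} {X : set 'rV[R]_n}.
Hypotheses (f_proper : proper_fun f) (X_dom : X `<=` dom f).
Local Notation V := 'rV[R]_n.

Lemma fin_num_on_dom x : dom f x -> f x \is a fin_num.
Proof. by rewrite fin_numE f_proper.1 /dom /= => /lt_eqF ->. Qed.

Lemma EFin_fine_on {x} : X x -> f x = (fine (f x))%:E.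
Proof. by move=> Xx; rewrite fineK // fin_num_on_dom //; exact: X_dom. Qed.

Lemma fshift0 x : fshift f 0 x = f x.
Proof. by rewrite /fshift dotp0l sube0. Qed.

Lemma Kq0 : Kq f 0.
Proof.
apply/ereal_supP => _ [x [t [fx _ ->]]].
by rewrite scaler0 addr0 subee ?mul0e ?fin_num_on_dom.
Qed.

Lemma lsc_Sol_singleton : lsc_setmap (Sol f X) 0 -> exists x0, Sol f X 0 = [set x0].
Proof.
move=> [[x1 S1] Sol_lsc]; exists x1; apply/seteqP; split => [x2 S2|_ ->] //.
apply: contrapT => x21; pose d := x1 - x2.
have d_neq0 : d != 0 by rewrite subr_eq0; apply/eqP => x12; apply: x21.
pose W := dotp d @^-1` [set s | s < dotp d x1].
have W_open : open W.
  by apply: open_comp (@open_lt _ _) => z _; exact: dotp_continuous.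
have W2 : W x2 by rewrite /W /= -subr_gt0 -dotpBr dotp_gt0.
have [U /nbhs_ballP [e /= e0 eU] SolU] := Sol_lsc W W_open (ex_intro _ x2 (conj S2 W2)).
pose eps := e / (`|d| + 1).
have eps0 : 0 < eps by rewrite divr_gt0 // ltr_wpDl.
have : ball (0 : V) e (eps *: d).
  rewrite -ball_normE /= sub0r normrN normrZ gtr0_norm //.
  by rewrite /eps mulrAC ltr_pdivrMr ?ltr_wpDl // ltr_pM2l // ltrDl.
move=> /eU /SolU [z [[Xz z_min] Wz]].
have := z_min x1 S1.1; have := S1.2 z Xz.
rewrite !fshift0 /fshift (EFin_fine_on Xz) (EFin_fine_on S1.1) -!EFinB !lee_fin.
rewrite !dotpZl => fz_ge fz_le.
have := mulr_gt0 eps0 (eqbRL (subr_gt0 _ _) Wz).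
by rewrite mulrBr; lra.
Qed.

Lemma Sol0_singleton_cone [x0] : closed X -> is_convex X -> Sol f X 0 = [set x0] ->
  asymptotic_cone X `&` Kq f = [set 0].
Proof.
move=> cX convX Sol0; have [Xx0 x0_min] : Sol f X 0 x0 by rewrite Sol0.
apply/seteqP; split => [d [d_cone d_Kq]|_ ->]; last first.
  by split; [exact: asymptotic_cone0 Xx0 | exact: Kq0].
have Xx0d := asymptotic_cone_recession cX convX Xx0 d_cone.
have : ((f (x0 + 1 *: d) - f x0) * 1^-1%:E <= qasymp f d)%E.
  by apply: ereal_sup_ubound; exists x0, 1; split => //; exact: X_dom.
move=> /le_trans /(_ d_Kq); rewrite scale1r invr1 mule1.
rewrite (EFin_fine_on Xx0d) (EFin_fine_on Xx0) -EFinB lee_fin subr_le0 => fx0d_le.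
have : Sol f X 0 (x0 + d).
  split => // y Xy; apply: le_trans (x0_min y Xy).
  by rewrite !fshift0 (EFin_fine_on Xx0d) (EFin_fine_on Xx0) lee_fin.
by rewrite Sol0 /= -{2}[x0]addr0 => /addrI.
Qed.

Lemma Sol0_singleton_sphere_gap [x0 r] :
  closed X -> lower_semicontinuous f -> 0 < r -> Sol f X 0 = [set x0] ->
  exists2 del, 0 < del & forall u p, `|u| < del -> X p -> `|x0 - p| = r ->
    (fshift f u x0 < fshift f u p)%E.
Proof.
move=> cX lsc_f r0 Sol0; have [Xx0 x0_min] : Sol f X 0 x0 by rewrite Sol0.
pose S := X `&` [set p | `|x0 - p| = r].
have cS : compact S.
  apply: subclosed_compact (compact_closed_ball_meet X x0 r cX) _.
    by apply: closedI cX _; exact: closed_sphere.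
  by move=> p [Xp x0p]; split => //; rewrite /closed_ball_ /= x0p.
have f_gt p : S p -> ((fine (f x0))%:E < f p)%E.
  move=> [Xp /= x0p]; rewrite -EFin_fine_on // ltNge; apply/negP => fp_le.
  have : Sol f X 0 p.
    by split => // y Xy; rewrite fshift0 (le_trans fp_le) // -fshift0 x0_min.
  rewrite Sol0 => p_x0; move: x0p; rewrite p_x0 subrr normr0 => r_eq0.
  by rewrite r_eq0 ltxx in r0.
have [c c0 c_gap] := lower_semicontinuous_compact_gap _ _ _ lsc_f cS f_gt.
have nr1_gt0 : 0 < n%:R * r + 1 by rewrite ltr_wpDl // mulr_ge0 // ltW.
exists (c / (n%:R * r + 1)) => [|u p u_lt Xp x0p]; first exact: divr_gt0.
have := c_gap p (conj Xp x0p); rewrite (EFin_fine_on Xp) lee_fin => fp_ge.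
rewrite /fshift (EFin_fine_on Xp) (EFin_fine_on Xx0) -!EFinB lte_fin.
have := dotp_le_mx_norm u (p - x0); rewrite dotpBr (distrC p) x0p.
move: u_lt; rewrite ltr_pdivlMr // => u_lt dotp_le.
have := normr_ge0 u; have := ler_norm (dotp u p - dotp u x0); nra.
Qed.

Lemma Sol0_singleton_lsc [x0 alpha] :
  closed X -> is_convex X -> 0 < alpha -> robustly_quasiconvex alpha f ->
  lower_semicontinuous f -> Sol f X 0 = [set x0] -> lsc_setmap (Sol f X) 0.
Proof.
move=> cX convX alpha0 rqf lsc_f Sol0; have [Xx0 _] : Sol f X 0 x0 by rewrite Sol0.
split=> [|W W_open [x1 [Sx1 Wx1]]]; first by rewrite Sol0; exists x0.
have Wx0 : W x0 by move: Sx1; rewrite Sol0 => <-.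
have /nbhs_ballP [e /= e0 eW] : nbhs x0 W by exact: W_open.
pose r := e / 2; have r0 : 0 < r by rewrite divr_gt0.
have [del del0 sphere_gap] := Sol0_singleton_sphere_gap cX lsc_f r0 Sol0.
have Kx0 : (X `&` closed_ball_ Num.norm x0 r) x0.
  by split => //; rewrite /closed_ball_ /= subrr normr0 ltW.
exists (ball (0 : V) (Num.min del (alpha / n.+1%:R))).
  by apply: nbhsx_ballx; rewrite lt_min del0 divr_gt0.
move=> u; rewrite -ball_normE /= sub0r normrN lt_min => /andP[u_del u_alpha].
have qf : quasiconvex (fshift f u).
  have -> : fshift f u = fun x => (f x + (dotp (- u) x)%:E)%E.
    by apply/funext => x; rewrite /fshift dotpNl EFinN.
  apply: rqf; rewrite /open_ball0 /=; apply: le_lt_trans (enorm_le_mx_norm _) _.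
  rewrite ltr_pdivlMr // in u_alpha; apply: le_lt_trans u_alpha.
  by rewrite normrN mulrC ler_wpM2l // ler_nat.
have lsc_fu := lower_semicontinuousB _ _ lsc_f (@dotp_continuous _ _ u).
have [m [Xm x0m] m_min] := lower_semicontinuous_compact_min _ _ lsc_fu
  (compact_closed_ball_meet X x0 r cX) (ex_intro _ x0 Kx0).
exists m; split.
  split=> //; apply: (quasiconvex_min_sphere convX _ qf Xx0 r0) => //.
  - by move=> x Xx; rewrite /dom /fshift /= (EFin_fine_on Xx) -EFinB ltry.
  - by move=> p Xp x0p; exact: sphere_gap.
  - by move=> y Xy xy_le; apply: m_min.
apply: eW; rewrite -ball_normE /=; apply: le_lt_trans x0m _.
by rewrite /r ltr_pdivrMr // ltr_pMr // ltr1n.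
Qed.
End SolutionMap.

Theorem mainTheorem12 (R : realType) (n : nat) (f : 'rV[R]_n -> \bar R)
  (X : set 'rV[R]_n) (alpha : R) :
  proper_fun f -> lower_semicontinuous f ->
  X !=set0 -> closed X -> unbounded (dom f `&` X) ->
  is_convex X -> 0 < alpha -> robustly_quasiconvex alpha f ->
  X `<=` dom f ->
  (lsc_setmap (Sol f X) 0 <->
    ((exists x0, Sol f X 0 = [set x0]) /\
     asymptotic_cone X `&` Kq f = [set 0])).
Proof.
move=> f_proper lsc_f _ cX _ convX alpha0 rqf X_dom; split.
  move=> /(lsc_Sol_singleton f_proper X_dom) [x0 Sol0].
  by split; [exists x0 | exact: (Sol0_singleton_cone f_proper X_dom cX convX Sol0)].
move=> [[x0 Sol0] _].
exact: (Sol0_singleton_lsc f_proper X_dom cX convX alpha0 rqf lsc_f Sol0).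
Qed.
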